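(* Let $F$ be a field of characteristic not 2 or 3, and consider the split cube space $V=F^2\otimes F^2\otimes F^2$ with the action of $\tilde M(F)=(GL_2(F)^3)^0\rtimes S_3$. Let $v_0=u_1\otimes u_1\otimes u_1-u_2\otimes u_2\otimes u_2$ (the distinguished cube $(a,e,f,b)=(1,0,0,-1)$). Then \[\mathrm{Stab}_{(GL_2^3)^0}(v_0)=\Big\{\big(\mathrm{diag}(t_1,t_1^{-1}),\mathrm{diag}(t_2,t_2^{-1}),\mathrm{diag}(t_3,t_3^{-1})\big):t_1t_2t_3=1\Big\}\rtimes\{1,(w,w,w)\},\quad w=\begin{pmatrix}0&1\\1&0\end{pmatrix},\] so $\mathrm{Stab}_{M}(v_0)\cong\mathbb G_m^2\rtimes\mathbb Z/2\mathbb Z$, and $\mathrm{Stab}_{\tilde M}(v_0)=\mathrm{Stab}_M(v_0)\rtimes S_3$. This group coincides, as a subgroup of $(GL_2^3)^0\rtimes S_3=GL_2(F^3)^0\rtimes S_3$, with the $F$-automorphism group $\mathrm{Aut}_F(F^3,C_0,Q_0,\beta_0)$ of the split twisted composition algebra.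
   Context: $u_1=(1,0)^T$, $u_2=(0,1)^T$. Cube coordinates $(a,e,f,b)$, $e=(e_1,e_2,e_3)$, $f=(f_1,f_2,f_3)$: $a$ is the coefficient of $u_1^{\otimes3}$, $b$ of $u_2^{\otimes3}$, $e_i$ of the basis vector with $u_2$ in the $i$-th factor and $u_1$ elsewhere, $f_i$ of the basis vector with $u_1$ in the $i$-th factor and $u_2$ elsewhere. $(GL_2^3)^0$ is the group of triples $(g_1,g_2,g_3)$ of invertible $2\times2$ matrices with common determinant $d$; it acts on $V$ by $d^{-1}g_1\otimes g_2\otimes g_3$, and $S_3$ acts by permuting the tensor factors. The split twisted composition algebra $C_0$ is $E^2$ with $E=F^3$, $Q_0(x,y)=xy\in E$, $\beta_0(x,y)=(y^\#,x^\#)$ where $(x_1,x_2,x_3)^\#=(x_2x_3,x_3x_1,x_1x_2)$; its $F$-automorphisms are pairs $(\phi,\sigma)$, $\sigma\in S_3=\mathrm{Aut}(F^3)$, $\phi$ an $F$-linear bijection of $E^2$ with $\phi(av)=\sigma(a)\phi(v)$, $\sigma\circ Q_0=Q_0\circ\phi$, $\phi\circ\beta_0=\beta_0\circ\phi$; writing $\phi$ as an element of $GL_2(E)=GL_2(F)^3$ composed with $\sigma$ acting coordinatewise embeds this group into $GL_2(F^3)\rtimes S_3$. *)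

From HB Require Import structures.
From mathcomp Require Import all_boot all_order all_algebra all_fingroup.
Set Implicit Arguments. Unset Strict Implicit. Unset Printing Implicit Defensive.
Import GRing.Theory.
Local Open Scope ring_scope.

Section Defs.
Variable F : fieldType.

Definition u1 : 'I_2 := ord0.
Definition u2 : 'I_2 := ord_max.

(* A basis vector of V = F^2 (x) F^2 (x) F^2 is indexed by a function
   'I_3 -> 'I_2 (which basis vector sits in each tensor factor). *)
Definition idx := {ffun 'I_3 -> 'I_2}.
Definition cube := {ffun idx -> F}.

(* (GL_2^3)^0 : triples of invertible matrices with a common determinant. *)
Definition inM0 (g : 'I_3 -> 'M[F]_2) : Prop :=
  (forall i, g i \in unitmx) /\ (forall i j, \det (g i) = \det (g j)).

Definition cube_gact (g : 'I_3 -> 'M[F]_2) (v : cube) : cube :=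
  [ffun x : idx => (\det (g ord0))^-1 *
     \sum_(y : idx) (\prod_(i < 3) g i (x i) (y i)) * v y].

Definition cube_sact (s : 'S_3) (v : cube) : cube :=
  [ffun x : idx => v [ffun i => x (s i)]].

Definition cube_tact (g : 'I_3 -> 'M[F]_2) (s : 'S_3) (v : cube) : cube :=
  cube_gact g (cube_sact s v).

Definition v0 : cube :=
  [ffun x : idx => if x == [ffun _ => u1] then 1
                   else if x == [ffun _ => u2] then -1 else 0].

Definition dmat (t : F) : 'M[F]_2 :=
  \matrix_(i < 2, j < 2) (if i == j then (if i == u1 then t else t^-1) else 0).
Definition wmat : 'M[F]_2 := \matrix_(i < 2, j < 2) (if i == j then 0 else 1).

Definition E := {ffun 'I_3 -> F}.
Definition C0 := (E * E)%type.

Definition emul (a b : E) : E := [ffun i => a i * b i].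
Definition sharp (x : E) : E := [ffun i => \prod_(j < 3 | j != i) x j].
Definition cadd (u v : C0) : C0 := ([ffun i => u.1 i + v.1 i], [ffun i => u.2 i + v.2 i]).
Definition cscale (c : F) (u : C0) : C0 := ([ffun i => c * u.1 i], [ffun i => c * u.2 i]).
Definition emulC (a : E) (u : C0) : C0 := (emul a u.1, emul a u.2).
Definition Q0 (u : C0) : E := emul u.1 u.2.
Definition beta0 (u : C0) : C0 := (sharp u.2, sharp u.1).
Definition sE (s : 'S_3) (a : E) : E := [ffun i => a ((s^-1)%g i)].

Definition is_aut (phi : C0 -> C0) (s : 'S_3) : Prop :=
  [/\ (forall c u v, phi (cadd (cscale c u) v) = cadd (cscale c (phi u)) (phi v)),
      bijective phi,
      (forall (a : E) u, phi (emulC a u) = emulC (sE s a) (phi u)),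
      (forall u, Q0 (phi u) = sE s (Q0 u))
    & (forall u, phi (beta0 u) = beta0 (phi u))].

(* the embedding: h in GL_2(E) = GL_2(F)^3 composed with s acting coordinatewise *)
Definition embed (h : 'I_3 -> 'M[F]_2) (s : 'S_3) (u : C0) : C0 :=
  let x := sE s u.1 in let y := sE s u.2 in
  ([ffun i => h i u1 u1 * x i + h i u1 u2 * y i],
   [ffun i => h i u2 u1 * x i + h i u2 u2 * y i]).

End Defs.

From HB Require Import structures.
From mathcomp Require Import all_boot all_order all_algebra all_fingroup.
From mathcomp Require Import ring.
Import GRing.Theory.
Local Open Scope ring_scope.
Set Implicit Arguments. Unset Strict Implicit. Unset Printing Implicit Defensive.

(* Proposition 6.1: the stabiliser of v0 = u1^3 - u2^3.
   Write g_i = [[a_i, b_i], [c_i, d_i]] and view a, b, c, d as vectors of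
   E = F^3 with cross product x#.  Since x## = (prod x) x, a pair with
   y = x# and x = y# is either zero or satisfies prod x = 1, y = x^-1; hence
   the "sharp relations" d = a#, a = d#, c = b#, b = c# plus det g_0 <> 0
   force (g_i) to be diagonal or antidiagonal with product 1
   (stab_form_of_sharp).
   The converses are direct computations with monomial matrices, and S_3
   fixes v0. *)

Section Proposition.
Variable F : fieldType.
Implicit Types (g h : 'I_3 -> 'M[F]_2) (x y : E F) (t : 'I_3 -> F).
Implicit Types (u v : C0 F) (phi : C0 F -> C0 F).

Definition o1 : 'I_3 := Ordinal (isT : 1 < 3)%N.
Definition o2 : 'I_3 := Ordinal (isT : 2 < 3)%N.

Lemma ord2P (r : 'I_2) : r = u1 \/ r = u2.
Proof. by case: r => [[|[|]]] // Hr; [left|right]; apply: val_inj. Qed.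

Lemma ord3P (i : 'I_3) : [\/ i = ord0, i = o1 | i = o2].
Proof. by case: i => [[|[|[|]]]] // Hi; [apply: Or31|apply: Or32|apply: Or33]; apply: val_inj. Qed.

Lemma prod3 t : \prod_(i < 3) t i = t ord0 * t o1 * t o2.
Proof. by rewrite !big_ord_recr big_ord0 /= mul1r; congr (t _ * t _ * t _); apply: val_inj. Qed.

Lemma prod1_neq0 t i : \prod_(j < 3) t j = 1 -> t i != 0.
Proof.
move=> pt; apply/eqP => ti0; suff : \prod_(j < 3) t j == 0 by rewrite pt oner_eq0.
by apply/prodf_eq0; exists i; rewrite ?ti0.
Qed.

Lemma mx2P (M N : 'M[F]_2) :
  M u1 u1 = N u1 u1 -> M u1 u2 = N u1 u2 -> M u2 u1 = N u2 u1 -> M u2 u2 = N u2 u2 -> M = N.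
Proof.
by move=> h11 h12 h21 h22; apply/matrixP => r k; case: (ord2P r) => ->; case: (ord2P k) => ->.
Qed.

Lemma det2 (M : 'M[F]_2) : \det M = M u1 u1 * M u2 u2 - M u1 u2 * M u2 u1.
Proof.
rewrite (expand_det_row _ ord0) !big_ord_recr big_ord0 /= add0r /cofactor !det_mx11 !mxE /=.
by rewrite expr0 expr1 mul1r mulN1r mulrN; congr (_ * _ - _ * _); congr (M _ _); apply: val_inj.
Qed.

Lemma cramer2 (a b c d X Y r s : F) : a * d - b * c != 0 ->
  a * X - b * Y = r -> c * X - d * Y = s ->
  X = (d * r - b * s) / (a * d - b * c) /\ Y = (c * r - a * s) / (a * d - b * c).
Proof. by move=> D0 <- <-; split; apply: (mulIf D0); rewrite mulfVK //; ring. Qed.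

Definition flip2 (e : bool) (k : 'I_2) : 'I_2 := if e then (if k == u1 then u2 else u1) else k.

Lemma stab_mxE (s : F) (e : bool) r k :
  (dmat s *m (if e then wmat F else 1%:M)) r k =
  (r == flip2 e k)%:R * (if r == u1 then s else s^-1).
Proof.
rewrite mxE !big_ord_recr big_ord0 /= add0r !mxE.
by case: e; case: (ord2P r) => ->; case: (ord2P k) => ->; rewrite !mxE /=;
  rewrite ?(mulr0, mul0r, mulr1, mul1r, add0r, addr0).
Qed.

Lemma det_stab_mx (s : F) (e : bool) : s != 0 ->
  \det (dmat s *m (if e then wmat F else 1%:M)) = if e then -1 else 1.
Proof.
move=> s0; rewrite det2 !stab_mxE; case: e => /=;
  by rewrite ?(mulr0, mul0r, mulr1, mul1r, sub0r, subr0) ?mulfV.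
Qed.

Definition stab_form g : Prop :=
  exists t : 'I_3 -> F, exists e : bool,
    \prod_(i < 3) t i = 1 /\ forall i, g i = dmat (t i) *m (if e then wmat F else 1%:M).

Lemma sharpE x :
  [/\ sharp x ord0 = x o1 * x o2, sharp x o1 = x ord0 * x o2 & sharp x o2 = x ord0 * x o1].
Proof.
by rewrite !ffunE; split; rewrite big_mkcond !big_ord_recr big_ord0 /= !mul1r ?mulr1;
  congr (x _ * x _); apply: val_inj.
Qed.

Lemma sharp_cst (c : F) : sharp [ffun _ : 'I_3 => c] = [ffun _ => c * c].
Proof.
have [s0 s1 s2] := sharpE [ffun _ : 'I_3 => c].
by apply/ffunP => i; case: (ord3P i) => ->; rewrite ?s0 ?s1 ?s2 !ffunE.
Qed.

Lemma mul_sharp x i : x i * sharp x i = \prod_(j < 3) x j.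
Proof. by rewrite [RHS](bigD1 i) //= ffunE. Qed.

Lemma sharp_sharp x i : sharp (sharp x) i = x i * \prod_(j < 3) x j.
Proof.
have [s0 s1 s2] := sharpE x; have [ss0 ss1 ss2] := sharpE (sharp x).
by rewrite prod3; case: (ord3P i) => ->; rewrite ?ss0 ?ss1 ?ss2 ?s0 ?s1 ?s2; ring.
Qed.

Lemma sharp_emul x y : sharp (emul x y) = emul (sharp x) (sharp y).
Proof. by apply/ffunP => i; rewrite !ffunE -big_split; apply: eq_bigr => j _; rewrite ffunE. Qed.

Lemma sharp_inv x : \prod_(j < 3) x j = 1 -> forall i, sharp x i = (x i)^-1.
Proof. by move=> px i; apply/esym/mulr1_eq; rewrite mul_sharp. Qed.

Lemma sharp_pair x y : y = sharp x -> x = sharp y ->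
  (forall i, x i = 0 /\ y i = 0) \/ (\prod_(i < 3) x i = 1 /\ forall i, y i = (x i)^-1).
Proof.
move=> yE xE; case: (pickP (fun i => x i != 0)) => [i /= xi0 | x0]; last first.
  left=> i; have xi0 j : x j = 0 by apply/eqP/negbFE/x0.
  split=> //; rewrite yE ffunE (bigD1 (lift i ord0)) 1?eq_sym ?neq_lift //=.
  by rewrite xi0 mul0r.
have px : \prod_(j < 3) x j = 1.
  by apply: (mulfI xi0); rewrite mulr1 -sharp_sharp -yE -xE.
by right; split=> // j; rewrite yE sharp_inv.
Qed.

Definition entry g (r k : 'I_2) : E F := [ffun i => g i r k].

Lemma stab_form_of_sharp g :
  entry g u2 u2 = sharp (entry g u1 u1) -> entry g u1 u1 = sharp (entry g u2 u2) ->
  entry g u2 u1 = sharp (entry g u1 u2) -> entry g u1 u2 = sharp (entry g u2 u1) ->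
  \det (g ord0) != 0 -> stab_form g.
Proof.
move=> dE aE cE bE; rewrite det2 => det0.
have entryE r k i : entry g r k i = g i r k by rewrite ffunE.
have [ad0|[pa dinv]] := sharp_pair dE aE; have [bc0|[pb cinv]] := sharp_pair cE bE.
- move: (ad0 ord0) (bc0 ord0) det0; rewrite !entryE => -[-> ->] [-> ->].
  by rewrite mulr0 subrr eqxx.
- exists (fun i => g i u1 u2), true; split.
    by rewrite -[RHS]pb; apply: eq_bigr => i _; rewrite entryE.
  move=> i; move: (ad0 i) (cinv i) (stab_mxE (g i u1 u2) true).
  by rewrite !entryE /= => -[a0 d0] ci mE; apply: mx2P; rewrite !mE /= ?mul0r ?mul1r.
- exists (fun i => g i u1 u1), false; split.
    by rewrite -[RHS]pa; apply: eq_bigr => i _; rewrite entryE.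
  move=> i; move: (bc0 i) (dinv i) (stab_mxE (g i u1 u1) false).
  by rewrite !entryE /= => -[b0 c0] di mE; apply: mx2P; rewrite !mE /= ?mul0r ?mul1r.
- move: (prod1_neq0 ord0 pa) (prod1_neq0 ord0 pb) (dinv ord0) (cinv ord0) det0.
  by rewrite !entryE => a0 b0 -> ->; rewrite !mulfV // subrr eqxx.
Qed.

Lemma cst_neq : ([ffun _ => u1] == [ffun _ => u2] :> idx) = false.
Proof. by apply/eqP => /ffunP /(_ ord0); rewrite !ffunE. Qed.

Lemma v0E (z : idx) : v0 F z = (z == [ffun _ => u1])%:R - (z == [ffun _ => u2])%:R.
Proof.
rewrite ffunE; have [->|_] := eqVneq z [ffun _ => u1]; first by rewrite cst_neq subr0.
by case: (z == [ffun _ => u2]); rewrite /= ?sub0r ?oppr0.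
Qed.

Lemma sum_indicator (G : idx -> F) (c : idx) : \sum_(y : idx) G y * (y == c)%:R = G c.
Proof. by rewrite (bigD1 c) //= eqxx mulr1 big1 ?addr0 // => y /negbTE ->; rewrite mulr0. Qed.

Definition vprod g (z : idx) (k : 'I_2) : F := \prod_(i < 3) g i (z i) k.

Lemma gact_v0 g (z : idx) :
  cube_gact g (v0 F) z = (\det (g ord0))^-1 * (vprod g z u1 - vprod g z u2).
Proof.
rewrite ffunE; under eq_bigr do rewrite v0E mulrBr; rewrite sumrB !sum_indicator.
by congr (_ * (_ - _)); apply: eq_bigr => i _; rewrite ffunE.
Qed.

Lemma gact_v0P g : \det (g ord0) != 0 ->
  cube_gact g (v0 F) = v0 F <->
  forall z, vprod g z u1 - vprod g z u2 = \det (g ord0) * v0 F z.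
Proof.
move=> D0; split => [fix_v0 z | eq_v0]; last by apply/ffunP => z; rewrite gact_v0 eq_v0 mulKf.
by rewrite -fix_v0 gact_v0 mulVKf.
Qed.

Definition slice (i : 'I_3) (c r : 'I_2) : idx := [ffun j => if j == i then r else c].

Lemma vprod_slice g i c r k : vprod g (slice i c r) k = g i r k * sharp (entry g c k) i.
Proof.
rewrite /vprod (bigD1 i) //= !ffunE eqxx; congr (_ * _).
by apply: eq_bigr => j ji; rewrite !ffunE (negbTE ji).
Qed.

Lemma slice_cst i c r (w : 'I_2) :
  (slice i c r == [ffun _ => w] :> idx) = (c == w) && (r == w).
Proof.
apply/eqP/andP => [/ffunP sE | [/eqP -> /eqP ->]]; last first.
  by apply/ffunP => j; rewrite !ffunE; case: ifP.
have := sE i; have := sE (lift i ord0); rewrite !ffunE eqxx eq_sym (negbTE (neq_lift _ _)).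
by move=> -> ->.
Qed.

(* Stabiliser elements satisfy the sharp relations: on the slices through
   factor i the fixed-point equations are Cramer systems with matrix g_i. *)
Lemma stab_sharp g : inM0 g -> cube_gact g (v0 F) = v0 F ->
  [/\ entry g u2 u2 = sharp (entry g u1 u1), entry g u1 u1 = sharp (entry g u2 u2),
      entry g u2 u1 = sharp (entry g u1 u2) & entry g u1 u2 = sharp (entry g u2 u1)].
Proof.
move=> [gU gdet] fix_v0.
have D0 : \det (g ord0) != 0 by rewrite -unitfE -unitmxE.
move/(gact_v0P D0): fix_v0 => eq_v0.
have rel i : [/\ sharp (entry g u1 u1) i = g i u2 u2, sharp (entry g u2 u2) i = g i u1 u1,
                 sharp (entry g u1 u2) i = g i u2 u1 & sharp (entry g u2 u1) i = g i u1 u2].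
  have Di : g i u1 u1 * g i u2 u2 - g i u1 u2 * g i u2 u1 = \det (g ord0).
    by rewrite -det2 (gdet i ord0).
  have Di0 : g i u1 u1 * g i u2 u2 - g i u1 u2 * g i u2 u1 != 0 by rewrite Di.
  move: (eq_v0 (slice i u2 u1)) (eq_v0 (slice i u2 u2)).
  move: (eq_v0 (slice i u1 u1)) (eq_v0 (slice i u1 u2)).
  rewrite !vprod_slice !v0E !slice_cst /= !(mulr1n, mulr0n, subr0, sub0r, mulr0, mulr1, mulrN).
  move=> e11 e12 e21 e22.
  have [-> ->] := cramer2 Di0 e11 e12; have [-> ->] := cramer2 Di0 e21 e22.
  by rewrite Di !(mulr0, subr0, mulrN, opprK, sub0r, mulfK D0).
by split; apply/ffunP => i; rewrite ffunE; case: (rel i).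
Qed.

Lemma prod_indicator (z : idx) (w : 'I_2) (f : 'I_3 -> 'I_2 -> F) :
  \prod_(i < 3) ((z i == w)%:R * f i (z i)) = (z == [ffun _ => w])%:R * \prod_(i < 3) f i w.
Proof.
have [->|/eqP zw] := eqVneq z [ffun _ => w].
  by rewrite mul1r; apply: eq_bigr => i _; rewrite ffunE eqxx mul1r.
rewrite mul0r; case: (pickP (fun i => z i != w)) => [i /= ziw | zw'].
  by rewrite (bigD1 i) //= (negbTE ziw) !mul0r.
by case: zw; apply/ffunP => i; rewrite ffunE; apply/eqP/negbFE/zw'.
Qed.

Lemma vprod_stab g t e : \prod_(i < 3) t i = 1 ->
  (forall i, g i = dmat (t i) *m (if e then wmat F else 1%:M)) ->
  forall z k, vprod g z k = (z == [ffun _ => flip2 e k])%:R.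
Proof.
move=> pt gE z k; rewrite /vprod; under eq_bigr do rewrite gE stab_mxE.
rewrite (prod_indicator _ _ (fun i r => if r == u1 then t i else (t i)^-1)).
by case: (_ == u1); rewrite ?prodfV pt ?invr1 mulr1.
Qed.

Lemma stab_form_stab g : stab_form g -> inM0 g /\ cube_gact g (v0 F) = v0 F.
Proof.
move=> [t [e [pt gE]]].
have detE i : \det (g i) = if e then -1 else 1 by rewrite gE det_stab_mx // prod1_neq0.
have D0 : \det (g ord0) != 0 by rewrite detE; case: (e); rewrite ?oppr_eq0 oner_eq0.
split; first by split=> [i | i j]; rewrite ?unitmxE ?unitfE !detE // -(detE ord0).
apply/(gact_v0P D0) => z; rewrite !(vprod_stab pt gE) v0E detE.
by case: (e); rewrite /flip2 /= ?mul1r // mulN1r opprB.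
Qed.

Lemma stabilizerP g : (inM0 g /\ cube_gact g (v0 F) = v0 F) <-> stab_form g.
Proof.
split=> [[gM fix_v0] | /stab_form_stab //].
have [dE aE cE bE] := stab_sharp gM fix_v0.
by apply: stab_form_of_sharp; rewrite // -unitfE -unitmxE; case: gM.
Qed.

Lemma sact_v0 (s : 'S_3) : cube_sact s (v0 F) = v0 F.
Proof.
have permE (z : idx) (w : 'I_2) :
    ([ffun i => z (s i)] == [ffun _ => w] :> idx) = (z == [ffun _ => w]).
  apply/eqP/eqP => [/ffunP zsE | ->]; last by apply/ffunP => i; rewrite !ffunE.
  by apply/ffunP => j; have := zsE ((s^-1)%g j); rewrite !ffunE permKV.
by apply/ffunP => z; rewrite !ffunE !permE.
Qed.

Lemma tact_v0 h (s : 'S_3) : cube_tact h s (v0 F) = cube_gact h (v0 F).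
Proof. by rewrite /cube_tact sact_v0. Qed.

Lemma sE_emul (s : 'S_3) x y : sE s (emul x y) = emul (sE s x) (sE s y).
Proof. by apply/ffunP => i; rewrite !ffunE. Qed.

Lemma sE_sharp (s : 'S_3) x : sE s (sharp x) = sharp (sE s x).
Proof.
apply/ffunP => i; rewrite !ffunE (reindex_inj (@perm_inj _ (s^-1)%g)) /=.
by apply: eq_big => [k | k _]; rewrite ?ffunE // (inj_eq (@perm_inj _ _)).
Qed.

Lemma sEK (s : 'S_3) : cancel (@sE F s) (sE (s^-1)%g).
Proof. by move=> x; apply/ffunP => i; rewrite !ffunE invgK permK. Qed.

Lemma sKE (s : 'S_3) : cancel (@sE F (s^-1)%g) (sE s).
Proof. by move=> x; apply/ffunP => i; rewrite !ffunE invgK permKV. Qed.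

Lemma embed_lin h (s : 'S_3) c u v :
  embed h s (cadd (cscale c u) v) = cadd (cscale c (embed h s u)) (embed h s v).
Proof. by congr (_, _); apply/ffunP => i; rewrite !ffunE; ring. Qed.

Lemma embed_emul h (s : 'S_3) a u : embed h s (emulC a u) = emulC (sE s a) (embed h s u).
Proof. by congr (_, _); apply/ffunP => i; rewrite !ffunE; ring. Qed.

Definition embed_inv h (s : 'S_3) (v : C0 F) : C0 F :=
  (sE (s^-1)%g [ffun i => (h i u2 u2 * v.1 i - h i u1 u2 * v.2 i) / \det (h i)],
   sE (s^-1)%g [ffun i => (h i u1 u1 * v.2 i - h i u2 u1 * v.1 i) / \det (h i)]).

Lemma embed_bij h (s : 'S_3) : (forall i, \det (h i) != 0) -> bijective (embed h s).
Proof.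
move=> hD; exists (embed_inv h s) => [[x y] | [x y]]; rewrite /embed_inv /embed /= ?sKE.
  by congr (_, _); rewrite -[RHS](sEK s); congr (sE _ _);
    apply/ffunP => i; rewrite !ffunE; move: (hD i); rewrite det2 => hi; field.
by congr (_, _); apply/ffunP => i; rewrite !ffunE; move: (hD i); rewrite det2 => hi; field.
Qed.

(* For h of stabiliser form, embed h s multiplies by t and t^-1 (after a
   swap when e holds); this makes it respect Q0 and beta0. *)
Section StabEmbedding.
Variables (h : 'I_3 -> 'M[F]_2) (t : 'I_3 -> F) (e : bool).
Hypothesis pt : \prod_(i < 3) t i = 1.
Hypothesis hE : forall i, h i = dmat (t i) *m (if e then wmat F else 1%:M).

Let T : E F := [ffun i => t i].
Let Ti : E F := [ffun i => (t i)^-1].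

Lemma embed_stab (s : 'S_3) u :
  embed h s u = (emul T (if e then sE s u.2 else sE s u.1),
                 emul Ti (if e then sE s u.1 else sE s u.2)).
Proof.
congr (_, _); apply/ffunP => i; rewrite !ffunE !hE !stab_mxE.
  by case: (e); rewrite /flip2 /= !ffunE !(mul0r, mul1r, add0r, addr0).
by case: (e); rewrite /flip2 /= !ffunE !(mul0r, mul1r, add0r, addr0).
Qed.

Lemma sharpT : sharp T = Ti.
Proof.
have prodT : \prod_(i < 3) T i = 1 by rewrite -[RHS]pt; apply: eq_bigr => i _; rewrite ffunE.
by apply/ffunP => i; rewrite sharp_inv // !ffunE.
Qed.

Lemma sharpTi : sharp Ti = T.
Proof.
have prodTi : \prod_(i < 3) Ti i = 1.
  by rewrite (eq_bigr (fun i => (t i)^-1)) ?prodfV ?pt ?invr1 // => i _; rewrite ffunE.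
by apply/ffunP => i; rewrite sharp_inv // !ffunE invrK.
Qed.

Lemma embed_Q0 (s : 'S_3) u : Q0 (embed h s u) = sE s (Q0 u).
Proof.
rewrite embed_stab /Q0 sE_emul; apply/ffunP => i; have ti0 := prod1_neq0 i pt.
by case: (e); rewrite !ffunE mulrACA ?mulfV ?mulVf ?mul1r // mulrC.
Qed.

Lemma embed_beta (s : 'S_3) u : embed h s (beta0 u) = beta0 (embed h s u).
Proof. by rewrite !embed_stab /beta0 /= !sE_sharp !sharp_emul sharpT sharpTi; case: (e). Qed.

Lemma embed_aut (s : 'S_3) : is_aut (embed h s) s.
Proof.
split; [exact: embed_lin | apply: embed_bij | exact: embed_emul | exact: embed_Q0 | exact: embed_beta].
by move=> i; rewrite hE det_stab_mx ?prod1_neq0 //; case: (e); rewrite ?oppr_eq0 oner_eq0.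
Qed.

End StabEmbedding.

Definition ebasis (k : 'I_2) : C0 F :=
  if k == u1 then ([ffun _ => 1], [ffun _ => 0]) else ([ffun _ => 0], [ffun _ => 1]).

Definition cpart (w : C0 F) (r : 'I_2) : E F := if r == u1 then w.1 else w.2.

Definition aut_mx phi (i : 'I_3) : 'M[F]_2 := \matrix_(r, k) cpart (phi (ebasis k)) r i.

Lemma entry_aut_mx phi r k : entry (aut_mx phi) r k = cpart (phi (ebasis k)) r.
Proof. by apply/ffunP => i; rewrite !ffunE mxE. Qed.

Lemma aut_add phi (s : 'S_3) u v : is_aut phi s -> phi (cadd u v) = cadd (phi u) (phi v).
Proof.
case=> lin _ _ _ _; have scale1 (w : C0 F) : cscale 1 w = w.
  by case: w => x y; congr (_, _); apply/ffunP => i; rewrite ffunE mul1r.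
by rewrite -{1}(scale1 u) lin scale1.
Qed.

(* Semilinearity determines phi from the images of the E-basis. *)
Lemma aut_embed phi (s : 'S_3) : is_aut phi s -> phi =1 embed (aut_mx phi) s.
Proof.
move=> phiA [x y]; have [_ _ semi _ _] := phiA.
have xyE : (x, y) = cadd (emulC x (ebasis u1)) (emulC y (ebasis u2)).
  by congr (_, _); apply/ffunP => i; rewrite !ffunE /= ?mulr1 ?mulr0 ?addr0 ?add0r.
rewrite {1}xyE (aut_add _ _ phiA) !semi.
by congr (_, _); apply/ffunP => i; rewrite !ffunE !mxE /cpart /=; ring.
Qed.

(* If ac = bd = 0 and (a + b)(c + d) = 1, then ad - bc = ad + bc = 1 with
   one of ad, bc zero, so ad - bc = +-1. *)
Lemma det_of_Q0 (a b c d : F) :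
  a * c = 0 -> b * d = 0 -> (a + b) * (c + d) = 1 -> a * d - b * c != 0.
Proof.
move=> ac bd.
have -> : (a + b) * (c + d) = a * d + b * c + a * c + b * d by ring.
rewrite ac bd !addr0 => sum1.
have : (a * d) * (b * c) == 0 by rewrite mulrACA [d * _]mulrC -mulrACA ac mul0r.
rewrite mulf_eq0 => /orP [/eqP ad0 | /eqP bc0].
  by move: sum1; rewrite ad0 !add0r => ->; rewrite oppr_eq0 oner_eq0.
by move: sum1; rewrite bc0 !addr0 => ->; rewrite subr0 oner_eq0.
Qed.

(* beta0 swaps the E-basis, giving the sharp relations for aut_mx phi;
   Q0 on the E-basis gives the invertibility of its first factor. *)
Lemma aut_mx_stab_form phi (s : 'S_3) : is_aut phi s -> stab_form (aut_mx phi).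
Proof.
move=> phiA; have [_ _ _ q bt] := phiA.
have e2E : phi (ebasis u2) = beta0 (phi (ebasis u1)).
  by rewrite -bt /beta0 /= !sharp_cst mulr0 mulr1.
have e1E : phi (ebasis u1) = beta0 (phi (ebasis u2)).
  by rewrite -bt /beta0 /= !sharp_cst mulr0 mulr1.
apply: stab_form_of_sharp; rewrite ?entry_aut_mx /cpart /=;
  [by rewrite e2E | by rewrite e1E | by rewrite e1E | by rewrite e2E |].
have q0 w : (phi w).1 ord0 * (phi w).2 ord0 = w.1 ((s^-1)%g ord0) * w.2 ((s^-1)%g ord0).
  by have := congr1 (fun z : E F => z ord0) (q w); rewrite !ffunE.
rewrite det2 !mxE /cpart /=; apply: det_of_Q0; rewrite ?q0 ?ffunE /= ?mulr0 ?mul0r //.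
move: (q0 (cadd (ebasis u1) (ebasis u2))).
by rewrite (aut_add _ _ phiA) !ffunE /= addr0 add0r mulr1.
Qed.

Lemma aut_ext phi psi (s : 'S_3) : phi =1 psi -> is_aut psi s -> is_aut phi s.
Proof.
move=> phiE [lin bij semi q bt]; split=> [c u v | | a u | u | u]; rewrite ?phiE //.
by apply: (eq_bij bij) => u; rewrite phiE.
Qed.

Lemma autP phi (s : 'S_3) :
  is_aut phi s <-> exists2 h, inM0 h /\ cube_tact h s (v0 F) = v0 F & phi =1 embed h s.
Proof.
rewrite /cube_tact sact_v0; split=> [phiA | [h /stabilizerP [t [e [pt hE]]] phiE]].
  exists (aut_mx phi); last exact: aut_embed.
  by apply/stabilizerP; apply: aut_mx_stab_form phiA.
by apply: aut_ext phiE _; apply: embed_aut pt hE s.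
Qed.

End Proposition.

Theorem proposition6p1 (F : fieldType)
    (hF2 : (2%:R : F) != 0) (hF3 : (3%:R : F) != 0) :
  (forall g : 'I_3 -> 'M[F]_2,
      (inM0 g /\ cube_gact g (v0 F) = v0 F) <->
      (exists t : 'I_3 -> F, exists e : bool,
          \prod_(i < 3) t i = 1 /\
          forall i, g i = dmat (t i) *m (if e then wmat F else 1%:M)))
  /\ (forall (g : 'I_3 -> 'M[F]_2) (s : 'S_3),
      (inM0 g /\ cube_tact g s (v0 F) = v0 F) <-> (inM0 g /\ cube_gact g (v0 F) = v0 F))
  /\ (forall (phi : C0 F -> C0 F) (s : 'S_3),
      is_aut phi s <->
      exists2 h : 'I_3 -> 'M[F]_2, inM0 h /\ cube_tact h s (v0 F) = v0 F
                                  & phi =1 embed h s).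
Proof.
split; first exact: stabilizerP.
split=> [g s | phi s]; first by rewrite tact_v0.
exact: autP.
Qed.
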